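(* For an integer $\ell\ge 1$ and $1\le u\le \ell^3$ let $c_u(\ell):=\#\{(a,b,c)\in\{1,\dots,\ell\}^3:\ abc=u\}$, and set $$C_3(\ell):=\sum_{\substack{u,v\le \ell^3\\ uv \text{ is a perfect square}}} c_u(\ell)c_v(\ell).$$ Then for every $\delta>0$ one has $C_3(m)\ll_\delta m^{3+\delta}$ for all integers $m\ge 1$.
   Context: $f\ll_\delta g$ means $|f|\le C g$ for a constant $C$ depending only on $\delta$ (for all sufficiently large $m$). *)

From mathcomp Require Import all_boot.
From Stdlib Require Import Reals.

Definition is_square (n : nat) : bool := [exists k : 'I_n.+1, (k * k == n)%N].

Definition c_count (u l : nat) : nat :=
  (\sum_(1 <= a < l.+1) \sum_(1 <= b < l.+1) \sum_(1 <= c < l.+1)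
      ((a * b * c)%N == u : nat))%N.

Definition C3 (l : nat) : nat :=
  (\sum_(1 <= u < (l ^ 3).+1) \sum_(1 <= v < (l ^ 3).+1 | is_square (u * v))
      c_count u l * c_count v l)%N.

(* A triple (a, b, c) with abc = u is determined by the divisors a, b of u,
   so c_u(l) <= tau(u)^2; a pair (u, v) with uv = k^2, k <= l^3, is determined by k and
   the divisor u of k^2.  Hence C_3(l) <= T^5 l^3, where T bounds tau on [1, l^6].
   The divisor bound tau(n)^K <= C_K n, proved prime by prime, gives T^K <= C_K l^6,
   and with K = 5N this yields C_3(l)^N <= C_K l^(3N+6). *)

From mathcomp Require Import all_boot.
From Stdlib Require Import Reals Lra.
(* Reals rebinds [^] on nat to [Nat.pow] (as in [C3]); re-importing ssrnat restores [expn]. *)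
From mathcomp Require Import ssrnat zify.

Set Implicit Arguments.
Unset Strict Implicit.

Lemma Nat_powE m n : Nat.pow m n = m ^ n.
Proof. by elim: n => [|n IH]; rewrite ?expnS //= IH. Qed.

Lemma sum_bool_count (I : Type) (r : seq I) (a : pred I) :
  \sum_(i <- r) (a i : nat) = count a r.
Proof. by rewrite -sumn_count sumnE big_map. Qed.

Lemma count_leq_image (I J : eqType) (r1 : seq I) (r2 : seq J)
    (A : pred I) (B : pred J) (f : J -> I) :
    uniq r1 -> {in r1, forall i, A i -> exists2 j, j \in r2 & B j && (f j == i)} ->
  count A r1 <= count B r2.
Proof.
move=> r1_uniq r1_im; rewrite -!size_filter -(size_map f).
apply: uniq_leq_size; first exact: filter_uniq.
move=> i; rewrite mem_filter => /andP[Ai ir1].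
have [j jr2 /andP[Bj /eqP <-]] := r1_im i ir1 Ai.
by apply: map_f; rewrite mem_filter Bj.
Qed.

Definition ndivisors n := size (divisors n).

Lemma count_dvdn_leq_ndivisors (r : seq nat) u : uniq r -> 0 < u ->
  count (dvdn^~ u) r <= ndivisors u.
Proof.
move=> r_uniq u_gt0; rewrite -size_filter.
apply: uniq_leq_size; first exact: filter_uniq.
by move=> d; rewrite mem_filter -dvdn_divisors // => /andP[].
Qed.

Lemma dvdn_mul_split d a b : 0 < a -> d %| a * b ->
  exists2 d1, d1 %| a & exists2 d2, d2 %| b & d = d1 * d2.
Proof.
move=> a_gt0 d_ab; set g := gcdn d a.
have g_d : g %| d := dvdn_gcdl d a.
have g_gt0 : 0 < g by rewrite gcdn_gt0 a_gt0 orbT.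
exists g; first exact: dvdn_gcdr.
exists (d %/ g); last by rewrite mulnC divnK.
have : lcmn d a %| a * b by rewrite dvdn_lcm d_ab dvdn_mulr.
by rewrite /lcmn -/g -divn_mulAC // mulnC dvdn_pmul2l.
Qed.

Lemma ndivisors_gt0 n : 0 < ndivisors n.
Proof. by rewrite /ndivisors; case: (divisors n) (divisor1 n). Qed.

Lemma ndivisorsM a b : ndivisors (a * b) <= ndivisors a * ndivisors b.
Proof.
(* [divisors 0 = [:: 1]], so [ndivisors 0 = 1]. *)
have [-> | a_gt0] := posnP a; first by rewrite mul0n muln_gt0 !ndivisors_gt0.
have [-> | b_gt0] := posnP b; first by rewrite muln0 muln_gt0 !ndivisors_gt0.
rewrite /ndivisors -(size_allpairs muln).
apply: uniq_leq_size (divisors_uniq _) _ => d.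
rewrite -dvdn_divisors ?muln_gt0 ?a_gt0 // => /(dvdn_mul_split a_gt0).
case=> d1 d1_a [d2 d2_b ->]; apply/allpairsP; exists (d1, d2).
by rewrite -!dvdn_divisors.
Qed.

Lemma ndivisors_pfactor p e : prime p -> ndivisors (p ^ e) <= e.+1.
Proof.
move=> p_pr; rewrite -(size_iota 0 e.+1) -(size_map (expn p)).
apply: uniq_leq_size (divisors_uniq _) _ => d.
rewrite -dvdn_divisors ?expn_gt0 ?prime_gt0 // => /(dvdn_pfactor _ _ p_pr).
by case=> i i_le_e ->; rewrite map_f // mem_iota.
Qed.

Lemma exp_succ_leq_pow2 K e : 0 < K -> e.+1 ^ K <= K ^ K * 2 ^ e.
Proof.
move=> K_gt0.
have e_lt : e.+1 <= K * (e %/ K).+1.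
  by rewrite mulnS {1}(divn_eq e K) mulnC addnC ltn_add2r ltn_pmod.
apply: leq_trans (_ : (K * 2 ^ (e %/ K)) ^ K <= _).
  by rewrite leq_exp2r //; apply: leq_trans e_lt (leq_mul _ (ltn_expl _ _)).
by rewrite expnMn leq_mul2l -expnM leq_exp2l // leq_divM orbT.
Qed.

(* For p >= 2^K the factor (e+1)^K is already dominated by p^e. *)
Lemma exp_succ_leq_pfactor K p e : 0 < K -> prime p ->
  e.+1 ^ K <= (K ^ K) ^ (p < 2 ^ K) * p ^ e.
Proof.
move=> K_gt0 p_pr; case: ltnP => [_ | p_ge] /=.
  rewrite expn1; apply: leq_trans (exp_succ_leq_pow2 e K_gt0) _.
  rewrite leq_mul2l; case: e => [|e]; first by rewrite orbT.
  by rewrite leq_exp2r // prime_gt1 ?orbT.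
rewrite expn0 mul1n; apply: leq_trans (_ : (2 ^ e) ^ K <= _).
  by rewrite leq_exp2r // ltn_expl.
rewrite -expnM mulnC expnM.
by case: e => [|e]; rewrite ?expn0 ?leq_exp2r.
Qed.

Lemma ndivisors_prod_exp_leq K (s : seq (nat * nat)) :
    0 < K -> all (fun f => prime f.1) s ->
  ndivisors (\prod_(f <- s) f.1 ^ f.2) ^ K
    <= (K ^ K) ^ count (fun f => f.1 < 2 ^ K) s * \prod_(f <- s) f.1 ^ f.2.
Proof.
move=> K_gt0; elim: s => [|[p e] s IH] /=; first by rewrite !big_nil exp1n.
case/andP=> p_pr s_pr; rewrite !big_cons /=.
apply: leq_trans (_ : (ndivisors (p ^ e) * ndivisors (\prod_(f <- s) f.1 ^ f.2)) ^ K <= _).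
  by rewrite leq_exp2r // ndivisorsM.
rewrite expnMn expnD mulnACA leq_mul ?IH //.
apply: leq_trans (exp_succ_leq_pfactor e K_gt0 p_pr).
by rewrite leq_exp2r // ndivisors_pfactor.
Qed.

Definition ndivisors_const K := (K ^ K) ^ (2 ^ K).

Lemma ndivisors_exp_leq K n : 0 < K -> 0 < n ->
  ndivisors n ^ K <= ndivisors_const K * n.
Proof.
move=> K_gt0 n_gt0.
have small_primes : count (fun f : nat * nat => f.1 < 2 ^ K) (prime_decomp n) <= 2 ^ K.
  rewrite -(count_map fst (fun p => p < 2 ^ K)) -size_filter -{2}(size_iota 0 (2 ^ K)).
  apply: uniq_leq_size; first exact/filter_uniq/primes_uniq.
  by move=> p; rewrite mem_filter mem_iota => /andP[].
have decomp_pr : all (fun f => prime f.1) (prime_decomp n).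
  by apply/allP => -[p e] /mem_prime_decomp[].
have := ndivisors_prod_exp_leq K_gt0 decomp_pr.
rewrite -prod_prime_decomp // => /leq_trans; apply.
by rewrite leq_mul // leq_pexp2l // expn_gt0 K_gt0.
Qed.

Lemma ndivisors_uniform_bound K B : 0 < K ->
  exists T, (forall n, 0 < n <= B -> ndivisors n <= T) /\ T ^ K <= ndivisors_const K * B.
Proof.
move=> K_gt0; elim: B => [|B [T [le_T T_K]]].
  by exists 0; split => [[] // | ]; rewrite exp0n.
exists (maxn T (ndivisors B.+1)); split.
  move=> n /andP[n_gt0]; rewrite leq_eqVlt ltnS => /orP[/eqP -> | n_le].
    exact: leq_maxr.
  by rewrite leq_max le_T ?n_gt0.
case: (leqP T (ndivisors B.+1)) => _.
  exact: ndivisors_exp_leq.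
by apply: leq_trans T_K _; rewrite leq_mul2l leqnSn orbT.
Qed.

Lemma sum_mul_eq_leq x u (r : seq nat) : uniq r -> 0 < u ->
  \sum_(c <- r) (x * c == u : nat) <= (x %| u).
Proof.
move=> r_uniq u_gt0.
have eq_split c : (x * c == u) = (x %| u) && (c == u %/ x).
  apply/eqP/andP => [xc_u | [x_u /eqP ->]]; last by rewrite mulnC divnK.
  have x_gt0 : 0 < x by move: u_gt0; rewrite -xc_u muln_gt0 => /andP[].
  by rewrite -xc_u dvdn_mulr // mulKn.
rewrite (eq_bigr (fun c => (x %| u) * (c == u %/ x))) => [|c _]; last first.
  by rewrite eq_split mulnb.
rewrite -big_distrr /= sum_bool_count count_uniq_mem //.
by rewrite -[leqRHS]muln1 leq_mul ?leq_b1.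
Qed.

Lemma c_count_leq u m : 0 < u -> c_count u m <= ndivisors u ^ 2.
Proof.
move=> u_gt0; rewrite /c_count -mulnn.
apply: (@leq_trans (\sum_(1 <= a < m.+1) \sum_(1 <= b < m.+1) (a %| u) * (b %| u))).
  apply: leq_sum => a _; apply: leq_sum => b _.
  apply: leq_trans (sum_mul_eq_leq _ (iota_uniq _ _) u_gt0) _.
  have [ab_u | //] := boolP (a * b %| u).
  by rewrite (dvdn_trans (dvdn_mulr b (dvdnn a)) ab_u) (dvdn_trans (dvdn_mull a (dvdnn b)) ab_u).
rewrite (eq_bigr _ (fun a _ => esym (big_distrr _ _ _))) -big_distrl /=.
by rewrite !sum_bool_count leq_mul ?count_dvdn_leq_ndivisors ?iota_uniq.
Qed.

Lemma count_square_leq_count_dvdn u M : 0 < u <= M ->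
  count (fun v => is_square (u * v)) (index_iota 1 M.+1)
    <= count (fun k => u %| k * k) (index_iota 1 M.+1).
Proof.
case/andP => u_gt0 u_le.
apply: (@count_leq_image _ _ _ _ _ _ (fun k => k * k %/ u)); first exact: iota_uniq.
move=> v; rewrite !mem_index_iota ltnS => /andP[v_gt0 v_le] /existsP[k /eqP kk].
exists (k : nat); last by rewrite kk dvdn_mulr //= mulKn.
have : u * v <= M * M := leq_mul u_le v_le.
rewrite mem_index_iota; nia.
Qed.

Lemma square_pairs_leq M T : (forall n, 0 < n <= M * M -> ndivisors n <= T) ->
  \sum_(1 <= u < M.+1) count (fun v => is_square (u * v)) (index_iota 1 M.+1) <= M * T.
Proof.
move=> le_T.
apply: (@leq_trans (\sum_(1 <= u < M.+1) \sum_(1 <= k < M.+1) (u %| k * k : nat))).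
  rewrite big_nat [leqRHS]big_nat; apply: leq_sum => u u_range.
  by rewrite sum_bool_count count_square_leq_count_dvdn.
rewrite exchange_big_nat /=.
apply: leq_trans (_ : \sum_(1 <= k < M.+1) T <= _); last by rewrite sum_nat_const_nat subn1.
rewrite big_nat [leqRHS]big_nat; apply: leq_sum => k /andP[k_gt0 k_le].
have kk_gt0 : 0 < k * k by rewrite muln_gt0 k_gt0.
rewrite sum_bool_count; apply: leq_trans (count_dvdn_leq_ndivisors (iota_uniq _ _) kk_gt0) _.
by rewrite le_T // kk_gt0 leq_mul.
Qed.

Lemma C3_leq m T : (forall n, 0 < n <= m ^ 3 * m ^ 3 -> ndivisors n <= T) ->
  C3 m <= T ^ 5 * m ^ 3.
Proof.
move=> le_T; rewrite /C3 Nat_powE.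
have c_le u : 0 < u <= m ^ 3 -> c_count u m <= T ^ 2.
  case/andP=> u_gt0 u_le; apply: leq_trans (c_count_leq m u_gt0) _.
  have M_le : m ^ 3 <= m ^ 3 * m ^ 3 by rewrite leq_pmulr // (leq_trans u_gt0 u_le).
  by rewrite leq_exp2r // le_T // u_gt0 (leq_trans u_le M_le).
apply: (@leq_trans (\sum_(1 <= u < (m ^ 3).+1) \sum_(1 <= v < (m ^ 3).+1 | is_square (u * v)) T ^ 4)).
  rewrite big_nat [leqRHS]big_nat; apply: leq_sum => u u_range.
  rewrite big_nat_cond [leqRHS]big_nat_cond; apply: leq_sum => v /andP[v_range _].
  by rewrite (_ : 4 = 2 + 2) // expnD leq_mul ?c_le.
under eq_bigr do rewrite -[T ^ 4]muln1 -big_distrr /= sum1_count.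
rewrite -big_distrr /= (_ : 5 = 4 + 1) // expnD expn1 -mulnA leq_mul2l.
by apply/orP; right; rewrite [T * _]mulnC; apply: square_pairs_leq.
Qed.

Lemma C3_exp_leq N m : 0 < N -> C3 m ^ N <= ndivisors_const (5 * N) * m ^ (3 * N + 6).
Proof.
move=> N_gt0; have K_gt0 : 0 < 5 * N by rewrite muln_gt0.
have [T [le_T T_K]] := ndivisors_uniform_bound (m ^ 3 * m ^ 3) K_gt0.
apply: leq_trans (_ : (T ^ 5 * m ^ 3) ^ N <= _); first by rewrite leq_exp2r ?C3_leq.
rewrite expnMn -expnM; apply: leq_trans (leq_mul T_K (leqnn _)) _.
by rewrite -mulnA -expnM -!expnD addnC.
Qed.

Lemma pow_le_Rpower_inv (x y : R) N : 0 < N -> (0 <= x)%R -> (x ^ N <= y)%R ->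
  (x <= Rpower y (/ INR N))%R.
Proof.
move=> N_gt0 x_ge0 xN_le.
have N_pos : (0 < INR N)%R by apply/lt_0_INR/ltP.
case: (Rle_lt_or_eq_dec _ _ x_ge0) => [x_pos | <-]; last exact/Rlt_le/exp_pos.
have -> : x = Rpower (x ^ N) (/ INR N).
  by rewrite -Rpower_pow // Rpower_mult Rinv_r ?Rpower_1 //; lra.
apply: Rle_Rpower_l; first exact/Rlt_le/Rinv_0_lt_compat.
by split; first exact: pow_lt.
Qed.

Lemma INR_le_Rpower_of_exp_leq (X D m N a b : nat) (e : R) :
    0 < N -> 0 < D -> 0 < m -> X ^ N <= D * m ^ (a * N + b) -> (INR b / INR N <= e)%R ->
  (INR X <= Rpower (INR D) (/ INR N) * Rpower (INR m) (INR a + e))%R.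
Proof.
move=> N_gt0 D_gt0 m_gt0 XN_le b_le.
have N_pos : (0 < INR N)%R by apply/lt_0_INR/ltP.
have D_pos : (0 < INR D)%R by apply/lt_0_INR/ltP.
have m_ge1 : (1 <= INR m)%R by apply: (le_INR 1); apply/leP.
pose y := (INR D * INR m ^ (a * N + b))%R.
apply: Rle_trans (pow_le_Rpower_inv (y := y) N_gt0 (pos_INR X) _) _.
  by rewrite /y -!pow_INR -mult_INR !Nat_powE; apply/le_INR/leP.
rewrite /y -Rpower_mult_distr //; last by apply: pow_lt; lra.
apply: Rmult_le_compat_l; first exact/Rlt_le/exp_pos.
rewrite -Rpower_pow ?Rpower_mult; last by lra.
apply: Rle_Rpower => //.
rewrite plus_INR mult_INR Rmult_plus_distr_r Rmult_assoc Rinv_r; last lra.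
rewrite /Rdiv in b_le; lra.
Qed.

Theorem lemma2p3 :
  forall delta : R, (0 < delta)%R ->
  exists C : R, forall m : nat, (1 <= m)%N ->
    (INR (C3 m) <= C * Rpower (INR m) (3 + delta))%R.
Proof.
move=> delta delta_pos.
have [N [N_inv N_pos]] := archimed_cor1 (delta / 6) ltac:(lra).
have N_gt0 : 0 < N by apply/ltP.
exists (Rpower (INR (ndivisors_const (5 * N))) (/ INR N)) => m m_gt0.
rewrite (_ : 3 = INR 3)%R; last by rewrite /=; lra.
have D_gt0 : 0 < ndivisors_const (5 * N) by rewrite !expn_gt0 muln_gt0 N_gt0.
apply: INR_le_Rpower_of_exp_leq N_gt0 D_gt0 m_gt0 (C3_exp_leq m N_gt0) _.
rewrite (_ : INR 6 = 6)%R /Rdiv; last by rewrite /=; lra.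
lra.
Qed.
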